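(* Let $G$ be a profinite group, $A,B$ closed subgroups of $G$ with $B$ properly contained in $A$, and let $\{H_\alpha\}_{\alpha\le\mu}$ be an accessible series from $G$ to a closed subgroup $H=H_\mu$. Suppose $AH\neq BH$. Then there exists $\alpha<\mu$ such that $(A\cap H_\alpha)H_{\alpha+1}\neq (B\cap H_\alpha)H_{\alpha+1}$.
   Context: An accessible series from a profinite group $G$ to a closed subgroup $H$ over an ordinal $\mu$ is a family of closed subgroups $G=H_0\ge\cdots\ge H_\lambda\ge\cdots\ge H_\mu=H$ with $H_{\alpha+1}\trianglelefteq H_\alpha$ for all $\alpha<\mu$ and $H_\alpha=\bigcap_{\beta<\alpha}H_\beta$ for all limit ordinals $\alpha\le\mu$. *)

From HB Require Import structures.
From mathcomp Require Import all_boot all_order.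
From mathcomp Require Import all_classical all_reals all_analysis.
Set Implicit Arguments. Unset Strict Implicit. Unset Printing Implicit Defensive.
Import Order.TTheory.
Local Open Scope classical_set_scope.

Definition group_axioms (G : Type) (mul : G -> G -> G) (inv : G -> G) (one : G) :=
  [/\ forall x y z, mul x (mul y z) = mul (mul x y) z,
      forall x, mul one x = x,
      forall x, mul x one = x,
      forall x, mul (inv x) x = one &
      forall x, mul x (inv x) = one].

Definition topological_group (G : topologicalType) (mul : G -> G -> G)
    (inv : G -> G) (one : G) :=
  [/\ group_axioms mul inv one,
      continuous (fun p : G * G => mul p.1 p.2) &
      continuous inv].

Definition profinite_group (G : topologicalType) (mul : G -> G -> G)
    (inv : G -> G) (one : G) :=
  [/\ topological_group mul inv one,
      compact [set: G],
      hausdorff_space G &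
      totally_disconnected [set: G]].

Section Subgroups.
Context (G : Type) (mul : G -> G -> G) (inv : G -> G) (one : G).

Definition is_subgroup (S : set G) :=
  [/\ S one, forall x y, S x -> S y -> S (mul x y) & forall x, S x -> S (inv x)].

Definition normal_sub (N K : set G) :=
  [/\ is_subgroup N, N `<=` K &
      forall k n, K k -> N n -> N (mul (inv k) (mul n k))].

Definition setmul (X Y : set G) : set G :=
  [set z | exists2 x, X x & exists2 y, Y y & z = mul x y].
End Subgroups.

Definition closed_subgroup (G : topologicalType) (mul : G -> G -> G)
    (inv : G -> G) (one : G) (S : set G) :=
  is_subgroup mul inv one S /\ closed S.

Definition is_succ d (O : orderType d) (a b : O) :=
  (a < b)%O /\ forall c, (a < c)%O -> (b <= c)%O.

Definition is_limit d (O : orderType d) (a : O) :=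
  (exists b, (b < a)%O) /\ forall b, (b < a)%O -> exists c, (b < c)%O /\ (c < a)%O.

(* The indices of an accessible series over an ordinal mu are the ordinals
   alpha <= mu; we model them by a well-ordered type O (a total order which
   is well-founded) having a greatest element mu. *)
Definition ordinal_index d (O : orderType d) (mu : O) :=
  well_founded (fun x y : O => (x < y)%O) /\ forall a : O, (a <= mu)%O.

Definition accessible_series (G : topologicalType) (mul : G -> G -> G)
    (inv : G -> G) (one : G) d (O : orderType d) (Hs : O -> set G) :=
  [/\ forall a, closed_subgroup mul inv one (Hs a),
      forall a, (forall b, ~ (b < a)%O) -> Hs a = [set: G],
      forall a b, (a <= b)%O -> Hs b `<=` Hs a,
      forall a b, is_succ a b -> normal_sub mul inv one (Hs b) (Hs a) &
      forall a, is_limit a -> Hs a = \bigcap_(b in [set b | (b < a)%O]) Hs b].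

From HB Require Import structures.
From mathcomp Require Import all_boot all_order.
From mathcomp Require Import all_classical all_reals all_analysis.
Set Implicit Arguments. Unset Strict Implicit. Unset Printing Implicit Defensive.
Import Order.TTheory.
Local Open Scope classical_set_scope.

(* Suppose all the successor steps are equalities.  By transfinite induction
   on alpha, A lies in B H_alpha.  At a successor alpha = beta + 1, write
   x = y k with y in B and k in H_beta; then k lies in
   (A ∩ H_beta) H_alpha = (B ∩ H_beta) H_alpha, so x lies in B H_alpha.  At a
   limit alpha, the sets {y in B | y^-1 x in H_beta}, beta < alpha, are closed,
   nonempty and decreasing, so by compactness they have a common point y, and
   y^-1 x lies in their intersection H_alpha.  For alpha = mu, A ⊆ B H gives
   A H = B H. *)

Lemma min_succ_or_limit d (O : orderType d) (a : O) :
  (forall b, ~ (b < a)%O) \/ (exists b, is_succ b a) \/ is_limit a.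
Proof.
have [[b0 b0a]|nob] := pselect (exists b, (b < a)%O); last first.
  by left=> b ba; apply: nob; exists b.
have [succ|nosucc] := pselect (exists b, is_succ b a); first by right; left.
right; right; split; first by exists b0.
move=> b ba; apply: contrapT => nomid; apply: nosucc; exists b; split=> // c bc.
by rewrite leNgt; apply/negP => ca; apply: nomid; exists c.
Qed.

Lemma chain_upper_bound d (I : orderType d) (D : set I) :
  D !=set0 -> forall s : seq I, {subset s <= D} ->
  exists2 m, D m & forall i, i \in s -> (i <= m)%O.
Proof.
move=> [i0 Di0]; elim=> [|i s IHs] sD; first by exists i0.
have [|m Dm le_sm] := IHs; first by move=> j js; apply: sD; rewrite inE js orbT.
have [im|mi] := leP i m.
  by exists m => // j; rewrite inE => /predU1P[->|/le_sm].
exists i; first by rewrite -in_setE; apply: sD; rewrite mem_head.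
move=> j; rewrite inE => /predU1P[->//|/le_sm jm].
exact: le_trans jm (ltW mi).
Qed.

Lemma chain_finI d (I : orderType d) T (D : set I) (F : I -> set T) :
  D !=set0 -> (forall i j, D i -> D j -> (i <= j)%O -> F j `<=` F i) ->
  (forall i, D i -> F i !=set0) -> finI D F.
Proof.
move=> D0 Fdecr Fn0 D' sD.
have [m Dm le_m] := chain_upper_bound D0 (s := finmap.enum_fset D') sD.
have [y Fmy] := Fn0 m Dm.
exists y => i D'i; apply: (Fdecr i m) (le_m i D'i) y Fmy => //.
by rewrite -in_setE; apply: sD.
Qed.

Lemma compact_finI_bigcap (T : topologicalType) (I : choiceType) (D : set I)
    (F : I -> set T) :
  compact [set: T] -> (forall i, D i -> closed (F i)) -> finI D F ->
  \bigcap_(i in D) F i !=set0.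
Proof.
move=> Tcomp Fcl FfinI.
have FF := finI_filter FfinI.
have [p [_ clp]] := Tcomp _ FF filterT.
exists p => i Di; apply: (Fcl i Di) => U Up.
by apply: clp => //; exists (F i) => //; apply: finI_from1.
Qed.

Section GroupProducts.
Variables (G : Type) (mul : G -> G -> G) (inv : G -> G) (one : G).
Hypothesis Ggroup : group_axioms mul inv one.

Lemma mulKg y x : mul (inv y) (mul y x) = x.
Proof. by case: Ggroup => mulA mul1g _ mulVg _; rewrite mulA mulVg mul1g. Qed.

Lemma mulKVg y x : mul y (mul (inv y) x) = x.
Proof. by case: Ggroup => mulA mul1g _ _ mulgV; rewrite mulA mulgV mul1g. Qed.

Lemma setmulP (B H : set G) x :
  setmul mul B H x <-> exists2 y, B y & H (mul (inv y) x).
Proof.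
split=> [[y By [h Hh ->]]|[y By Hyx]]; first by exists y; rewrite ?mulKg.
by exists y => //; exists (mul (inv y) x); rewrite ?mulKVg.
Qed.

Lemma setmul_eq_of_sub (A B H : set G) :
  is_subgroup mul inv one H -> B `<=` A -> A `<=` setmul mul B H ->
  setmul mul A H = setmul mul B H.
Proof.
move=> [_ HM _] BA sAB; apply/seteqP; split; last first.
  by move=> _ [y By [h Hh ->]]; exists y; [apply: BA|exists h].
move=> _ [x /sAB[y By [k Hk ->]] [h Hh ->]].
have [mulA _ _ _ _] := Ggroup.
by exists y => //; exists (mul k h); rewrite ?mulA //; apply: HM.
Qed.

Lemma sub_setmul_succ (A B K N : set G) :
  is_subgroup mul inv one A -> is_subgroup mul inv one B -> B `<=` A -> N one ->
  A `<=` setmul mul B K ->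
  setmul mul (A `&` K) N = setmul mul (B `&` K) N ->
  A `<=` setmul mul B N.
Proof.
move=> [_ AM AI] [_ BM _] BA N1 sAB eqAB x Ax.
have [mulA _ mulg1 _ _] := Ggroup.
have [y By Kyx] := (setmulP _ _ _).1 (sAB x Ax).
have AKyx : (A `&` K) (mul (inv y) x) by split=> //; apply/AM/Ax/AI/BA.
have : setmul mul (A `&` K) N (mul (inv y) x).
  by exists (mul (inv y) x) => //; exists one; rewrite ?mulg1.
rewrite eqAB => -[z [Bz _] [n Nn yx_eq]].
exists (mul y z); first exact: BM.
by exists n => //; rewrite -mulA -yx_eq mulKVg.
Qed.

End GroupProducts.

Section CompactGroups.
Variables (G : topologicalType) (mul : G -> G -> G) (inv : G -> G) (one : G).
Hypothesis Gtop : topological_group mul inv one.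
Hypothesis Gcomp : compact [set: G].

Lemma continuous_mulVl x : continuous (fun y => mul (inv y) x).
Proof.
have [_ mul_cont inv_cont] := Gtop; move=> y.
apply: (@continuous2_cvg _ G G G _ _ inv (fun=> x) mul (inv y) x).
- exact: (mul_cont (inv y, x)).
- exact: inv_cont.
- exact: cvg_cst.
Qed.

Lemma setmul_bigcap_chain d (I : orderType d) (D : set I) (B : set G)
    (Hs : I -> set G) x :
  closed B -> D !=set0 -> (forall i, D i -> closed (Hs i)) ->
  (forall i j, D i -> D j -> (i <= j)%O -> Hs j `<=` Hs i) ->
  (forall i, D i -> setmul mul B (Hs i) x) ->
  setmul mul B (\bigcap_(i in D) Hs i) x.
Proof.
move=> Bcl D0 Hcl Hdecr BHx; have [Ggroup _ _] := Gtop.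
pose F i := B `&` (fun y => mul (inv y) x) @^-1` Hs i.
have Fcl i : D i -> closed (F i).
  move=> Di; apply: closedI => //.
  by apply: preimage_closed; [move=> y _; apply: continuous_mulVl|apply: Hcl].
have Fdecr i j : D i -> D j -> (i <= j)%O -> F j `<=` F i.
  by move=> Di Dj ij y [By Hyx]; split=> //; apply: Hdecr Hyx.
have Fn0 i : D i -> F i !=set0.
  by move=> Di; have [y By Hyx] := (setmulP Ggroup _ _ _).1 (BHx i Di); exists y.
have [y Fy] := compact_finI_bigcap Gcomp Fcl (chain_finI D0 Fdecr Fn0).
have [i0 Di0] := D0.
apply/(setmulP Ggroup); exists y; first by have [] := Fy i0 Di0.
by move=> i Di; have [] := Fy i Di.
Qed.

Lemma accessible_series_sub_setmul d (O : orderType d) (Hs : O -> set G)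
    (A B : set G) :
  well_founded (fun a b : O => (a < b)%O) ->
  accessible_series mul inv one Hs ->
  is_subgroup mul inv one A -> closed_subgroup mul inv one B -> B `<=` A ->
  (forall a b, is_succ a b ->
    setmul mul (A `&` Hs a) (Hs b) = setmul mul (B `&` Hs a) (Hs b)) ->
  forall a, A `<=` setmul mul B (Hs a).
Proof.
move=> wf [Hcl Hmin Hmono Hsucc Hlim] Asub [Bsub Bcl] BA succ_eq.
have [Ggroup _ _] := Gtop.
elim/(well_founded_induction wf) => a IH.
have [amin|[[b sba]|alim]] := min_succ_or_limit a.
- move=> x _; apply/(setmulP Ggroup); exists one; first by case: Bsub.
  by rewrite Hmin.
- have [[N1 _ _] _ _] := Hsucc b a sba.
  exact: (sub_setmul_succ Ggroup Asub Bsub BA N1 (IH b sba.1) (succ_eq b a sba)).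
- rewrite Hlim // => x Ax.
  apply: setmul_bigcap_chain => //.
  + by case: alim.
  + by move=> b _; case: (Hcl b).
  + by move=> b c _ _; apply: Hmono.
  + by move=> b ba; apply: IH.
Qed.

End CompactGroups.

Theorem lemma1p9 (G : topologicalType) (mul : G -> G -> G) (inv : G -> G) (one : G)
  (d : Order.disp_t) (O : orderType d) (mu : O) (Hs : O -> set G) (A B : set G) :
  profinite_group mul inv one ->
  ordinal_index mu ->
  accessible_series mul inv one Hs ->
  closed_subgroup mul inv one A ->
  closed_subgroup mul inv one B ->
  B `<=` A -> B <> A ->
  setmul mul A (Hs mu) <> setmul mul B (Hs mu) ->
  exists a b : O, [/\ (a < mu)%O, is_succ a b &
    setmul mul (A `&` Hs a) (Hs b) <> setmul mul (B `&` Hs a) (Hs b)].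
Proof.
move=> [Gtop Gcomp _ _] [wf le_mu] series [Asub _] Bcsub BA _ AHneBH.
apply: contrapT => no_jump; apply: AHneBH.
have [Ggroup _ _] := Gtop; have [Hcsub _ _ _ _] := series.
apply: (setmul_eq_of_sub Ggroup (proj1 (Hcsub mu)) BA).
apply: (accessible_series_sub_setmul Gtop Gcomp wf series Asub Bcsub BA) => //.
move=> a b sab; apply: contrapT => neq; apply: no_jump.
by exists a, b; split=> //; apply: lt_le_trans sab.1 (le_mu b).
Qed.
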